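(* Let $\mathbf A\in\mathbb C^{m\times n}$, $\mathbf B\in\mathbb C^{s\times n}$, let $\mathbf X_{LS}=(x_{ij})\in\mathbb C^{s\times m}$ be the minimum norm least squares solution of $\mathbf X\mathbf A=\mathbf B$, and let $\check{\mathbf B}=\mathbf B\mathbf A^{*}$ with $i$-th row $\check{\mathbf b}_{i.}$. (i) If $\operatorname{rank}\mathbf A=r\le n<m$, then for all $i=1,\dots,s$, $j=1,\dots,m$, \[x_{ij}=\frac{\sum_{\alpha\in I_{r,m}\{j\}}\left|\left((\mathbf A\mathbf A^{*})_{j.}(\check{\mathbf b}_{i.})\right)^{\alpha}_{\alpha}\right|}{\sum_{\alpha\in I_{r,m}}\left|(\mathbf A\mathbf A^{*})^{\alpha}_{\alpha}\right|}.\] (ii) If $\operatorname{rank}\mathbf A=m$, then for all $i=1,\dots,s$, $j=1,\dots,m$, $x_{ij}=\dfrac{\det\left((\mathbf A\mathbf A^{*})_{j.}(\check{\mathbf b}_{i.})\right)}{\det(\mathbf A\mathbf A^{*})}$.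
   Context: $\mathbf X_{LS}$ is the matrix of minimal Frobenius norm among all $\mathbf X\in\mathbb C^{s\times m}$ minimizing the Frobenius norm $\|\mathbf X\mathbf A-\mathbf B\|$. $\mathbf M_{j.}(\mathbf c)$ denotes $\mathbf M$ with its $j$-th row replaced by the row vector $\mathbf c$. $I_{r,m}$ is the set of strictly increasing sequences of $r$ elements of $\{1,\dots,m\}$, $I_{r,m}\{j\}=\{\alpha\in I_{r,m}:j\in\alpha\}$, $\mathbf M^{\alpha}_{\alpha}$ is the principal submatrix indexed by $\alpha$, $|\cdot|$ is the determinant. *)

(* Complex scalars: an arbitrary numClosedFieldType C
   (e.g. complex R for R : rcfType, i.e. the complex numbers). *)
From mathcomp Require Import all_boot all_order all_algebra.
Set Implicit Arguments. Unset Strict Implicit. Unset Printing Implicit Defensive.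
Import Order.TTheory GRing.Theory Num.Theory.
Local Open Scope ring_scope.

Section Defs.
Variable C : numClosedFieldType.

Definition ctmx {m n} (A : 'M[C]_(m, n)) : 'M[C]_(n, m) :=
  \matrix_(i, j) (A j i)^*.

Definition frob {m n} (M : 'M[C]_(m, n)) : C :=
  sqrtC (\sum_i \sum_j `|M i j| ^+ 2).

Definition is_ls_sol {s m n} (A : 'M[C]_(m, n)) (B : 'M[C]_(s, n))
  (X : 'M[C]_(s, m)) : Prop :=
  forall Y : 'M[C]_(s, m), frob (X *m A - B) <= frob (Y *m A - B).

Definition is_min_norm_ls {s m n} (A : 'M[C]_(m, n)) (B : 'M[C]_(s, n))
  (X : 'M[C]_(s, m)) : Prop :=
  is_ls_sol A B X /\
  forall Y : 'M[C]_(s, m), is_ls_sol A B Y -> frob X <= frob Y.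

(* M_{j.}(c): M with its j-th row replaced by c *)
Definition rowrepl {m n} (j : 'I_m) (c : 'rV[C]_n) (M : 'M[C]_(m, n))
  : 'M[C]_(m, n) :=
  \matrix_(k, l) if k == j then c 0 l else M k l.
End Defs.

(* alpha in I_{r,m}: strictly increasing maps 'I_r -> 'I_m *)
Definition incr_seq {r m} (f : {ffun 'I_r -> 'I_m}) : bool :=
  [forall i : 'I_r, forall k : 'I_r, (i < k)%N ==> (f i < f k)%N].

Definition princ {R : Type} {r m} (f : {ffun 'I_r -> 'I_m}) (M : 'M[R]_m)
  : 'M[R]_r := mxsub f f M.

(* Write H := A A^*. The normal equations give X H = B A^*, and minimality of
   the norm puts the rows of X in the row space of A^*, so replacing a row of H
   by a row x of X gives a matrix of rank at most r = rank A. Cramer's rule for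
   H + tI applied to the row x (H + tI) reads
     x_j det (H + tI) = det ((H + tI_j')_{j.}(x H)) + t det ((H + tI_j')_{j.}(x)),
   where I_j' is the identity with its j-th diagonal entry removed. The
   coefficient of t^k in det (M + tD), D a 0/1 diagonal matrix, is a sum of
   principal minors of M of order m - k, so it vanishes for k < m - rank M.
   Comparing the coefficients of t^(m-r) gives the formula; the coefficient of
   t^(m-r) in det (H + tI) is nonzero because H is normal with exactly r nonzero
   eigenvalues. For rank A = m, H is invertible and plain Cramer's rule applies. *)

From mathcomp Require Import all_boot all_order all_algebra.
From mathcomp Require Import perm spectral ring zify.
Set Implicit Arguments. Unset Strict Implicit. Unset Printing Implicit Defensive.
Import Order.TTheory GRing.Theory Num.Theory Num.Def.
Local Open Scope ring_scope.

Section SetRow.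
Variable R : comNzRingType.

(* [rowrepl] over an arbitrary commutative ring; it is needed over polynomials. *)
Definition set_row m n (j : 'I_m) (c : 'rV[R]_n) (M : 'M[R]_(m, n)) :
  'M[R]_(m, n) := \matrix_(k, l) if k == j then c 0 l else M k l.

Lemma set_row_mulmx m n p (j : 'I_m) (c : 'rV[R]_n) (M : 'M[R]_(m, n))
    (G : 'M[R]_(n, p)) :
  set_row j (c *m G) (M *m G) = set_row j c M *m G.
Proof.
apply/matrixP => k l; rewrite mxE [RHS]mxE.
under [RHS]eq_bigr => t _ do rewrite mxE.
by case: ifP; rewrite mxE.
Qed.

Lemma det_set_row m (j : 'I_m) (c : 'rV[R]_m) (M : 'M[R]_m) :
  \det (set_row j c M) = (c *m \adj M) 0 j.
Proof.
rewrite (expand_det_row _ j) mxE; apply: eq_bigr => l _.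
rewrite !mxE eqxx; congr (_ * (_ * \det _)).
by apply/matrixP => a b; rewrite !mxE eq_sym (negbTE (neq_lift j a)).
Qed.

Lemma det_set_rowD m (j : 'I_m) (u v : 'rV[R]_m) (a : R) (M : 'M[R]_m) :
  \det (set_row j (u + a *: v) M) = \det (set_row j u M) + a * \det (set_row j v M).
Proof. by rewrite !det_set_row mulmxDl -scalemxAl !mxE. Qed.

Lemma cramer_set_row m (j : 'I_m) (x : 'rV[R]_m) (M : 'M[R]_m) :
  x 0 j * \det M = \det (set_row j (x *m M) M).
Proof. by rewrite det_set_row -mulmxA mul_mx_adj mul_mx_scalar mxE mulrC. Qed.

End SetRow.

Section PrincipalMinors.
Variable R : comNzRingType.

Definition idrows m (T : {set 'I_m}) (M : 'M[R]_m) : 'M[R]_m :=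
  \matrix_(i, j) if i \in T then (i == j)%:R else M i j.

Lemma det_add_diag m (M : 'M[R]_m) (d : 'rV[R]_m) :
  \det (M + diag_mx d) =
  \sum_(T : {set 'I_m}) (\prod_(i in T) d 0 i) * \det (idrows T M).
Proof.
have expand_term (s : 'S_m) : (-1) ^+ s * \prod_i (M + diag_mx d) i (s i) =
    \sum_(T : {set 'I_m}) (\prod_(i in T) d 0 i) *
      ((-1) ^+ s * \prod_i idrows T M i (s i)).
  rewrite (eq_bigr (fun i => d 0 i *+ (i == s i) + M i (s i))); last first.
    by move=> i _; rewrite !mxE addrC.
  rewrite bigA_distr big_distrr /=; apply: eq_bigr => T _.
  rewrite mulrCA; congr (_ * _).
  rewrite (big_mkcond (fun i => i \in T)) -big_split /=; apply: eq_bigr => i _.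
  by rewrite !mxE; case: (i \in T); rewrite /= ?mulr_natr ?mul1r.
rewrite /determinant (eq_bigr _ (fun s _ => expand_term s)) exchange_big /=.
by apply: eq_bigr => T _; rewrite big_distrr.
Qed.

Lemma det_mxsub_perm m (p : 'S_m) (M : 'M[R]_m) : \det (mxsub p p M) = \det M.
Proof.
rewrite mxsubrc -row_permEsub -col_permEsub row_permE col_permE !det_mulmx.
by rewrite !det_perm odd_permV mulrCA -signr_addb addbb mulr1.
Qed.

Lemma det_idrows_mxsub k m (f : 'I_k -> 'I_m) (M : 'M[R]_m) : injective f ->
  \det (idrows (~: [set x in codom f]) M) = \det (mxsub f f M).
Proof.
move=> f_inj; set T := ~: _.
have fT a : f a \notin T by rewrite !inE negbK codom_f.
have cardT : #|T| = (m - k)%N.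
  by rewrite cardsCs /T setCK cardsE card_codom // !card_ord.
have le_km : (k <= m)%N.
  by have := max_card (mem (codom f)); rewrite card_codom // !card_ord.
have [l def_m] : exists l, m = (k + l)%N by exists (m - k)%N; rewrite subnKC.
subst m; rewrite addKn in cardT.
pose g (b : 'I_l) : 'I_(k + l) := enum_val (cast_ord (esym cardT) b).
have gT b : g b \in T by apply: enum_valP.
have g_inj : injective g by move=> a b /enum_val_inj /cast_ord_inj.
pose h (i : 'I_(k + l)) := match split i with inl a => f a | inr b => g b end.
have h_inj : injective h.
  move=> i i'; rewrite /h -[i]splitK -[i']splitK.
  case: (split i) => a; case: (split i') => b; rewrite !unsplitK.
  - by move/f_inj ->.
  - by move=> fg; have := fT a; rewrite fg gT.
  - by move=> gf; have := fT b; rewrite -gf gT.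
  - by move/g_inj ->.
rewrite -(det_mxsub_perm (perm h_inj)).
have -> : mxsub (perm h_inj) (perm h_inj) (idrows T M) =
          block_mx (mxsub f f M) (mxsub f g (idrows T M)) 0 1%:M.
  apply/matrixP => i i'; rewrite mxE !permE /h -[i]splitK -[i']splitK.
  case: (split i) => a; case: (split i') => b; rewrite !unsplitK.
  - by rewrite block_mxEul !mxE (negbTE (fT a)).
  - by rewrite block_mxEur !mxE.
  - rewrite block_mxEdl !mxE gT; case: eqP => // gf.
    by have := fT b; rewrite -gf gT.
  - by rewrite block_mxEdr !mxE gT (inj_eq g_inj).
by rewrite det_ublock det1 mulr1.
Qed.

End PrincipalMinors.

Section IncreasingSequences.
Variables k m : nat.
Implicit Types f g : {ffun 'I_k -> 'I_m}.

Lemma incr_seq_inj f : incr_seq f -> injective f.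
Proof.
move=> /forallP f_incr a b fab; apply/val_inj/eqP; case: (ltngtP a b) => // ab.
  by have := implyP (forallP (f_incr a) b) ab; rewrite fab ltnn.
by have := implyP (forallP (f_incr b) a) ab; rewrite fab ltnn.
Qed.

Lemma incr_seq_sorted f : incr_seq f -> sorted (relpre val ltn) (codom f).
Proof.
move=> f_incr; rewrite codomE; apply: (homo_sorted (e := relpre val ltn)).
  by move=> a b ab; exact: (implyP (forallP (forallP f_incr a) b) ab).
by have := iota_ltn_sorted 0 k; rewrite -val_enum_ord sorted_map.
Qed.

Lemma eq_incr_seq f g :
  incr_seq f -> incr_seq g -> [set x in codom f] = [set x in codom g] -> f = g.
Proof.
move=> f_incr g_incr /setP eq_codom; apply/ffunP => i.
have : codom f = codom g.
  apply: (irr_sorted_eq (leT := relpre val ltn)).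
  - by move=> a b c; exact: ltn_trans.
  - by move=> a; rewrite /= ltnn.
  - exact: incr_seq_sorted.
  - exact: incr_seq_sorted.
  - by move=> x; have := eq_codom x; rewrite !inE.
by rewrite !codomE => /eq_in_map/(_ i); rewrite mem_enum => ->.
Qed.

Lemma incr_seq_of_set (S : {set 'I_m}) : #|S| = k ->
  exists2 f : {ffun 'I_k -> 'I_m}, incr_seq f & [set x in codom f] = S.
Proof.
move=> cardS; have le_km : (k <= m)%N by rewrite -cardS -[X in (_ <= X)%N]card_ord max_card.
have size_S : size (enum S) = k by rewrite -cardE.
have S_sorted : sorted ltn (map val (enum S)).
  rewrite -[enum _](eq_filter (mem_enum _)) -(eq_filter (mem_map val_inj _)).
  by rewrite -filter_map (sorted_filter ltn_trans) // unlock val_ord_enum iota_ltn_sorted.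
exists [ffun i => nth (widen_ord le_km i) (enum S) i].
  apply/forallP => a; apply/forallP => b; apply/implyP => ab; rewrite !ffunE.
  have := sorted_ltn_nth ltn_trans 0%N S_sorted a b.
  rewrite !inE size_map size_S !ltn_ord => /(_ isT isT ab).
  rewrite !(nth_map (widen_ord le_km a)) ?size_S //.
  by rewrite (set_nth_default (widen_ord le_km a) (widen_ord le_km b)) ?size_S.
apply/setP => x; rewrite inE; apply/codomP/idP => [[i ->]|xS].
  by rewrite ffunE -(mem_enum S) mem_nth ?size_S.
have ik : (index x (enum S) < k)%N by rewrite -size_S index_mem mem_enum.
by exists (Ordinal ik); rewrite ffunE nth_index ?mem_enum.
Qed.

Lemma big_incr_seq (V : nmodType) (P : pred {set 'I_m}) (G : {set 'I_m} -> V) :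
  \sum_(f : {ffun 'I_k -> 'I_m} | incr_seq f && P [set x in codom f])
     G [set x in codom f]
  = \sum_(S : {set 'I_m} | (#|S| == k) && P S) G S.
Proof.
rewrite big_mkcondr [RHS]big_mkcondr /=.
rewrite (eq_bigl (mem [set f : {ffun 'I_k -> 'I_m} | incr_seq f])) => [|f]; last first.
  by rewrite !inE.
rewrite -(big_imset (fun S => if P S then G S else 0)) => [|f g]; last first.
  by rewrite !inE; exact: eq_incr_seq.
apply: eq_bigl => S; apply/imsetP/idP => [[f]|/eqP cardS].
  by rewrite inE => f_incr ->; rewrite cardsE card_codom ?card_ord //; exact: incr_seq_inj.
by have [f f_incr <-] := incr_seq_of_set cardS; exists f; rewrite ?inE.
Qed.

End IncreasingSequences.

Section CharacteristicCoefficients.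
Variable R : comNzRingType.

Definition addXdiag m (P : pred 'I_m) (M : 'M[R]_m) : 'M[{poly R}]_m :=
  map_mx polyC M + diag_mx (\row_k (if P k then 'X else 0)).

Lemma coef_det_addXdiag_sets m (P : pred 'I_m) (M : 'M[R]_m) i :
  (\det (addXdiag P M))`_i =
  \sum_(T : {set 'I_m} | [forall x in T, P x] && (#|T| == i)) \det (idrows T M).
Proof.
rewrite det_add_diag coef_sum [RHS]big_mkcond /=; apply: eq_bigr => T _.
have -> : idrows T (map_mx polyC M) = map_mx polyC (idrows T M).
  by apply/matrixP => a b; rewrite !mxE; case: (a \in T); rewrite ?rmorph_nat.
have -> : \prod_(x in T) (\row_k (if P k then 'X else 0) : 'rV[{poly R}]_m) 0 x =
          if [forall x in T, P x] then 'X ^+ #|T| else 0.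
  case: forall_inP => [PT|/forall_inP/forall_inPn[x xT /negbTE Px]].
    by rewrite -prodr_const; apply: eq_bigr => x xT; rewrite mxE PT.
  by rewrite (bigD1 x) //= mxE Px mul0r.
case: ifP => _; last by rewrite mul0r coef0.
by rewrite det_map_mx mulrC coefCM coefXn eq_sym; case: eqP; rewrite ?mulr1 ?mulr0.
Qed.

Lemma coef_det_addXdiag m (P : pred 'I_m) (M : 'M[R]_m) r : (r <= m)%N ->
  (\det (addXdiag P M))`_(m - r) =
  \sum_(f : {ffun 'I_r -> 'I_m} |
          incr_seq f && [forall x in ~: [set y in codom f], P x])
     \det (princ f M).
Proof.
move=> le_rm; rewrite coef_det_addXdiag_sets.
under [RHS]eq_bigr => f /andP[f_incr _].
  rewrite /princ -det_idrows_mxsub; last exact: incr_seq_inj.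
over.
rewrite (big_incr_seq r (fun S => [forall x in ~: S, P x])
                        (fun S => \det (idrows (~: S) M))).
rewrite [LHS](reindex_inj (@setC_inj _)) /=; apply: eq_bigl => S.
rewrite andbC; congr (_ && _); rewrite cardsCs setCK card_ord.
by have := max_card (mem S); rewrite card_ord; move: #|S| => c; lia.
Qed.

Lemma coef_det_addXdiagT m (M : 'M[R]_m) r : (r <= m)%N ->
  (\det (addXdiag xpredT M))`_(m - r) =
  \sum_(f : {ffun 'I_r -> 'I_m} | incr_seq f) \det (princ f M).
Proof.
move=> le_rm; rewrite coef_det_addXdiag //; apply: eq_bigl => f.
by rewrite andb_idr // => _; apply/forall_inP.
Qed.

Lemma coef_det_addXdiag_row m (M : 'M[R]_m) (j : 'I_m) r : (r <= m)%N ->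
  (\det (addXdiag (fun l => l != j) M))`_(m - r) =
  \sum_(f : {ffun 'I_r -> 'I_m} | incr_seq f && (j \in codom f)) \det (princ f M).
Proof.
move=> le_rm; rewrite coef_det_addXdiag //; apply: eq_bigl => f; congr (_ && _).
apply/forall_inP/idP => [j_codom|j_codom x]; last first.
  by rewrite !inE; apply: contra => /eqP ->.
by apply: contraT => j_notin; have := j_codom j; rewrite !inE j_notin eqxx => /(_ isT).
Qed.

Lemma addXdiagT m (M : 'M[R]_m) :
  addXdiag xpredT M = map_mx polyC M + 'X%:M.
Proof. by congr (_ + _); apply/matrixP => a b; rewrite !mxE. Qed.

Lemma set_row_addXdiag m (j : 'I_m) (u : 'rV[R]_m) (M : 'M[R]_m) :
  set_row j (map_mx polyC u) (addXdiag xpredT M) =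
  addXdiag (fun l => l != j) (set_row j u M).
Proof.
apply/matrixP => a b; rewrite !mxE.
by case: (eqVneq a j) => [->|]; rewrite ?eqxx ?mul0rn ?addr0.
Qed.

End CharacteristicCoefficients.

Lemma mxrank_mxsub_le (F : fieldType) k m (f : 'I_k -> 'I_m) (M : 'M[F]_m) :
  (\rank (mxsub f f M) <= \rank M)%N.
Proof.
rewrite mxsubrc; apply: leq_trans (mxrankS (rowsub_sub _ _)) _.
rewrite -mxrank_tr -[X in (_ <= X)%N]mxrank_tr trmx_mxsub.
exact: mxrankS (rowsub_sub _ _).
Qed.

Lemma det_idrows_eq0 (F : fieldType) m (T : {set 'I_m}) (M : 'M[F]_m) :
  (\rank M < #|~: T|)%N -> \det (idrows T M) = 0.
Proof.
move=> rank_lt; have [f f_incr codom_f] := incr_seq_of_set (erefl #|~: T|).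
rewrite -[T]setCK -codom_f det_idrows_mxsub; last exact: incr_seq_inj.
apply/eqP; apply: contraLR rank_lt => /negPf det_neq0; rewrite -leqNgt.
have : mxsub f f M \in unitmx by rewrite unitmxE unitfE det_neq0.
by move/mxrank_unit <-; exact: mxrank_mxsub_le.
Qed.

Lemma coef_det_addXdiag_eq0 (F : fieldType) m (P : pred 'I_m) (M : 'M[F]_m) i :
  (i < m - \rank M)%N -> (\det (addXdiag P M))`_i = 0.
Proof.
move=> lt_i; rewrite coef_det_addXdiag_sets big1 // => T /andP[_ /eqP cardT].
by apply: det_idrows_eq0; rewrite cardsCs setCK card_ord cardT; lia.
Qed.

Lemma cramer_coef (F : fieldType) m (M : 'M[F]_m) (x : 'rV[F]_m) (j : 'I_m) k :
  (0 < k)%N -> (\rank (set_row j x M) + k <= m)%N ->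
  x 0 j * (\det (addXdiag xpredT M))`_k =
  (\det (addXdiag (fun l => l != j) (set_row j (x *m M) M)))`_k.
Proof.
move=> k_gt0 rank_le.
pose xX := map_mx polyC x.
have xXM : xX *m addXdiag xpredT M = map_mx polyC (x *m M) + 'X *: xX.
  by rewrite addXdiagT mulmxDr mul_mx_scalar map_mxM.
have perturbed_cramer : (x 0 j)%:P * \det (addXdiag xpredT M) =
    \det (addXdiag (fun l => l != j) (set_row j (x *m M) M)) +
    'X * \det (addXdiag (fun l => l != j) (set_row j x M)).
  have -> : (x 0 j)%:P = xX 0 j by rewrite mxE.
  by rewrite cramer_set_row xXM det_set_rowD !set_row_addXdiag.
rewrite -coefCM perturbed_cramer coefD coefXM (negbTE (lt0n_neq0 k_gt0)).
by rewrite [X in _ + X]coef_det_addXdiag_eq0 ?addr0 //; lia.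
Qed.

Lemma rank_diag_mx_le (F : fieldType) m (d : 'rV[F]_m) :
  (\rank (diag_mx d) <= #|~: [set k | (d 0 k == 0)%R]|)%N.
Proof.
set S := ~: _; pose g (i : 'I_#|S|) := enum_val i.
have sub_rows : (diag_mx d <= rowsub g (diag_mx d))%MS.
  apply/row_subP => k; case: (boolP (k \in S)) => kS.
    by rewrite -(enum_rankK_in kS kS) -row_rowsub row_sub.
  have -> : row k (diag_mx d) = 0.
    by apply/rowP => l; move: kS; rewrite !inE negbK !mxE => /eqP ->; rewrite mul0rn.
  exact: sub0mx.
exact: leq_trans (mxrankS sub_rows) (rank_leq_row _).
Qed.

Lemma det_addXdiagT_similar (R : comUnitRingType) m (M P : 'M[R]_m) (d : 'rV[R]_m) :
  P \in unitmx -> M = invmx P *m diag_mx d *m P ->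
  \det (addXdiag xpredT M) = \prod_k ('X + (d 0 k)%:P).
Proof.
move=> P_unit ->; rewrite addXdiagT.
have -> : 'X%:M = map_mx polyC (invmx P) *m 'X%:M *m map_mx polyC P :> 'M_m.
  by rewrite mul_mx_scalar -scalemxAl -map_mxM mulVmx // map_mx1 scalemx1.
rewrite !map_mxM -mulmxDl -mulmxDr !det_mulmx !det_map_mx mulrC mulrA.
rewrite -rmorphM -det_mulmx mulmxV // det1 mul1r.
have -> : map_mx polyC (diag_mx d) + 'X%:M = diag_mx (\row_k ('X + (d 0 k)%:P)).
  by apply/matrixP => i j; rewrite !mxE; case: (i == j); rewrite ?addr0 // addrC.
by rewrite det_diag; apply: eq_bigr => k _; rewrite mxE.
Qed.

Lemma coef_det_addXdiag_rank_neq0 (F : fieldType) m (M P : 'M[F]_m) (d : 'rV[F]_m) :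
  P \in unitmx -> M = invmx P *m diag_mx d *m P ->
  (\det (addXdiag xpredT M))`_(m - \rank M) != 0.
Proof.
move=> P_unit defM; rewrite (det_addXdiagT_similar P_unit defM).
set Z := [set k | d 0 k == 0]; set q := \prod_(k in ~: Z) ('X + (d 0 k)%:P).
have factor_X : \prod_k ('X + (d 0 k)%:P) = 'X ^+ #|Z| * q.
  rewrite (bigID (mem Z)) /= -prodr_const; congr (_ * _).
    by apply: eq_bigr => k; rewrite inE => /eqP ->; rewrite addr0.
  by apply: eq_bigl => k; rewrite !inE.
have q0_neq0 : q`_0 != 0.
  rewrite -horner_coef0 horner_prod; apply/prodf_neq0 => k.
  by rewrite !inE hornerD hornerX hornerC add0r.
have coefZ : (\prod_k ('X + (d 0 k)%:P))`_#|Z| = q`_0.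
  by rewrite factor_X coefXnM ltnn subnn.
have rank_le : (\rank M <= #|~: Z|)%N.
  rewrite defM; apply: leq_trans (mxrankM_maxl _ _) _.
  exact: leq_trans (mxrankM_maxr _ _) (rank_diag_mx_le d).
have cardZ_ge : (m - \rank M <= #|Z|)%N.
  rewrite leqNgt; apply/negP => lt_Z; move: q0_neq0.
  by rewrite -coefZ -(det_addXdiagT_similar P_unit defM) coef_det_addXdiag_eq0 ?eqxx.
have -> : (m - \rank M)%N = #|Z|.
  by apply/eqP; rewrite eqn_leq cardZ_ge; have := cardsC Z; rewrite card_ord; lia.
by rewrite coefZ.
Qed.

Section LeastSquares.
Variable C : numClosedFieldType.

Lemma ctmxE m n (M : 'M[C]_(m, n)) : ctmx M = map_mx conjC M^T.
Proof. by apply/matrixP => i j; rewrite !mxE. Qed.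

Lemma ctmxK m n (M : 'M[C]_(m, n)) : ctmx (ctmx M) = M.
Proof. by rewrite !ctmxE trmxCK. Qed.

Lemma ctmx_mul m n p (M : 'M[C]_(m, n)) (N : 'M[C]_(n, p)) :
  ctmx (M *m N) = ctmx N *m ctmx M.
Proof. by rewrite !ctmxE trmx_mul map_mxM. Qed.

Lemma mxrank_ctmx m n (M : 'M[C]_(m, n)) : \rank (ctmx M) = \rank M.
Proof. by rewrite ctmxE mxrank_map mxrank_tr. Qed.

Definition mxdot s m (U V : 'M[C]_(s, m)) : C := \sum_i \sum_j U i j * (V i j)^*.

Lemma frobE s m (U : 'M[C]_(s, m)) : frob U = sqrtC (mxdot U U).
Proof.
by congr sqrtC; apply: eq_bigr => i _; apply: eq_bigr => j _; rewrite normCK.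
Qed.

Lemma mxdot0r s m (U : 'M[C]_(s, m)) : mxdot U 0 = 0.
Proof. by rewrite /mxdot big1 // => i _; rewrite big1 // => j _; rewrite mxE conjC0 mulr0. Qed.

Lemma mxdot_self_ge0 s m (U : 'M[C]_(s, m)) : 0 <= mxdot U U.
Proof. by do 2![apply: sumr_ge0 => ? _]; apply: mul_conjC_ge0. Qed.

Lemma mxdot_self_eq0 s m (U : 'M[C]_(s, m)) : mxdot U U = 0 -> U = 0.
Proof.
have row_ge0 i : 0 <= \sum_j U i j * (U i j)^* by apply: sumr_ge0 => j _; apply: mul_conjC_ge0.
move=> /eqP; rewrite psumr_eq0 // => /allP U0; apply/matrixP => i j; rewrite mxE.
move/implyP: (U0 i (mem_index_enum _)); rewrite psumr_eq0 => [/(_ isT)/allP Ui0|k _].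
  by have := Ui0 j (mem_index_enum _); rewrite /= mul_conjC_eq0 => /eqP.
exact: mul_conjC_ge0.
Qed.

Lemma ler_frob s m (U V : 'M[C]_(s, m)) :
  (frob U <= frob V) = (mxdot U U <= mxdot V V).
Proof. by rewrite !frobE ler_sqrtC // qualifE /= mxdot_self_ge0. Qed.

Lemma mxdotC s m (U V : 'M[C]_(s, m)) : mxdot V U = (mxdot U V)^*.
Proof.
rewrite /mxdot rmorph_sum; apply: eq_bigr => i _; rewrite rmorph_sum.
by apply: eq_bigr => j _ /=; rewrite rmorphM /= conjCK mulrC.
Qed.

Lemma mxdot_mulmxr s p m (U : 'M[C]_(s, m)) (V : 'M[C]_(s, p)) (G : 'M[C]_(p, m)) :
  mxdot U (V *m G) = mxdot (U *m ctmx G) V.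
Proof.
apply: eq_bigr => i _.
under eq_bigr => j _ do rewrite mxE rmorph_sum mulr_sumr.
rewrite exchange_big /=; apply: eq_bigr => k _.
rewrite mxE mulr_suml; apply: eq_bigr => j _.
by rewrite !mxE rmorphM /=; ring.
Qed.

Lemma mxdot_self_addZ s m (E D : 'M[C]_(s, m)) (t : C) :
  mxdot (E + t *: D) (E + t *: D) =
  mxdot E E + t^* * mxdot E D + t * mxdot D E + t * t^* * mxdot D D.
Proof.
rewrite /mxdot !mulr_sumr -!big_split /=; apply: eq_bigr => i _.
rewrite !mulr_sumr -!big_split /=; apply: eq_bigr => j _.
by rewrite !mxE rmorphD rmorphM /=; ring.
Qed.

Lemma mxdot_eq0_of_min s m (E D : 'M[C]_(s, m)) :
  (forall t : C, mxdot E E <= mxdot (E + t *: D) (E + t *: D)) -> mxdot E D = 0.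
Proof.
move=> E_min; have [/mxdot_self_eq0 ->|D_neq0] := eqVneq (mxdot D D) 0.
  exact: mxdot0r.
set a := mxdot E D; set d := mxdot D D.
have d_gt0 : 0 < d by rewrite lt_def D_neq0 mxdot_self_ge0.
have d_real : d^* = d by apply/CrealP; apply: ger0_real; apply: ltW.
(* the best perturbation along D lowers the squared norm by |a|^2 / d *)
have := E_min (- a / d); rewrite mxdot_self_addZ -/a -/d [mxdot D E]mxdotC -/a.
rewrite rmorphM rmorphN /= fmorphV /= d_real.
have -> : mxdot E E + - a^* / d * a + - a / d * a^* + - a / d * (- a^* / d) * d
          = mxdot E E - a * a^* / d by field; rewrite lt0r_neq0.
rewrite -subr_ge0 addrAC subrr add0r oppr_ge0 pmulr_lle0 ?invr_gt0 // => aa_le0.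
by apply/eqP; rewrite -mul_conjC_eq0 eq_le aa_le0 mul_conjC_ge0.
Qed.

Lemma ls_normal_eq s m n (A : 'M[C]_(m, n)) (B : 'M[C]_(s, n)) (X : 'M[C]_(s, m)) :
  is_ls_sol A B X -> X *m (A *m ctmx A) = B *m ctmx A.
Proof.
move=> X_ls; set E := X *m A - B.
have E_perp Z : mxdot E (Z *m A) = 0.
  apply: mxdot_eq0_of_min => t; rewrite -ler_frob.
  have -> : E + t *: (Z *m A) = (X + t *: Z) *m A - B.
    by rewrite mulmxDl -scalemxAl /E addrAC.
  exact: X_ls.
apply/eqP; rewrite -subr_eq0 mulmxA -mulmxBl; apply/eqP/mxdot_self_eq0.
by rewrite -mxdot_mulmxr E_perp.
Qed.

Local Notation "B ^!" := (orthomx conjC (mx_of_hermitian (hermitian1mx _)) B)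
  : matrix_set_scope.

Lemma min_norm_ls_rowspace s m n (A : 'M[C]_(m, n)) (B : 'M[C]_(s, n))
    (X : 'M[C]_(s, m)) :
  is_min_norm_ls A B X -> exists Y : 'M[C]_(s, n), X = Y *m ctmx A.
Proof.
move=> [X_ls X_min].
have X_perp Z : Z *m A = 0 -> mxdot X Z = 0.
  move=> ZA; apply: mxdot_eq0_of_min => t; rewrite -ler_frob; apply: X_min => Y.
  by rewrite mulmxDl -scalemxAl ZA scaler0 addr0; apply: X_ls.
set W := (ctmx A)^!%MS.
have WA : W *m A = 0.
  by apply/eqP; have : (W <= (ctmx A)^!)%MS by []; rewrite orthomx1E ctmxE trmxCK.
have : (X <= W^!)%MS.
  rewrite orthomx1E -ctmxE; apply/eqP/mxdot_self_eq0.
  by rewrite -mxdot_mulmxr X_perp // -mulmxA WA mulmx0.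
by rewrite ortho_id => /submxP[Y ->]; exists Y.
Qed.

Lemma mxrank_mul_ctmx m n (A : 'M[C]_(m, n)) : \rank (A *m ctmx A) = \rank A.
Proof.
apply/eqP; rewrite eqn_leq mxrankM_maxl /=.
have : (kermx (A *m ctmx A) <= kermx A)%MS.
  apply/sub_kermxP/mxdot_self_eq0.
  by rewrite mxdot_mulmxr -mulmxA mulmx_ker mxdotC mxdot0r conjC0.
by move/mxrankS; rewrite !mxrank_ker; have := rank_leq_row A; lia.
Qed.

Lemma mxrank_set_row_gram m n (A : 'M[C]_(m, n)) (j : 'I_m) (y : 'rV[C]_n) :
  (\rank (set_row j (y *m ctmx A) (A *m ctmx A)) <= \rank A)%N.
Proof. by rewrite set_row_mulmx -(mxrank_ctmx A) mxrankM_maxr. Qed.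

Lemma coef_det_addXdiag_gram_neq0 m n (A : 'M[C]_(m, n)) :
  (\det (addXdiag xpredT (A *m ctmx A)))`_(m - \rank A) != 0.
Proof.
have /orthomx_spectralP gram_spectral : A *m ctmx A \is normalmx.
  by apply/normalmxP; rewrite -ctmxE ctmx_mul ctmxK.
rewrite -mxrank_mul_ctmx.
exact: coef_det_addXdiag_rank_neq0 (spectral_unit _) gram_spectral.
Qed.

End LeastSquares.

Theorem theorem4p2 (C : numClosedFieldType) (m n s : nat)
  (A : 'M[C]_(m, n)) (B : 'M[C]_(s, n)) (X : 'M[C]_(s, m))
  (hX : is_min_norm_ls A B X) :
  (forall r : nat, \rank A = r -> (r <= n)%N -> (n < m)%N ->
     forall (i : 'I_s) (j : 'I_m),
       X i j =
       (\sum_(f : {ffun 'I_r -> 'I_m} | incr_seq f && (j \in codom f))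
           \det (princ f (rowrepl j (row i (B *m ctmx A)) (A *m ctmx A))))
       / (\sum_(f : {ffun 'I_r -> 'I_m} | incr_seq f)
           \det (princ f (A *m ctmx A))))
  /\
  (\rank A = m ->
     forall (i : 'I_s) (j : 'I_m),
       X i j = \det (rowrepl j (row i (B *m ctmx A)) (A *m ctmx A))
               / \det (A *m ctmx A)).
Proof.
set H := A *m ctmx A.
have rowB i : row i (B *m ctmx A) = row i X *m H.
  by rewrite -(ls_normal_eq hX.1) row_mul.
have Xij i j : X i j = row i X 0 j by rewrite mxE.
split=> [r rankA le_rn lt_nm | rankA] i j; rewrite Xij rowB.
  have lt_rm : (r < m)%N := leq_ltn_trans le_rn lt_nm.
  have den_neq0 : (\det (addXdiag xpredT H))`_(m - r) != 0.
    by rewrite -rankA; exact: coef_det_addXdiag_gram_neq0.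
  rewrite -coef_det_addXdiag_row ?(ltnW lt_rm) // -coef_det_addXdiagT ?(ltnW lt_rm) //.
  apply: (canRL (mulfK den_neq0)); apply: cramer_coef; first by rewrite subn_gt0.
  have [Y ->] := min_norm_ls_rowspace hX.
  rewrite row_mul; apply: leq_trans (leq_add (mxrank_set_row_gram A j (row i Y)) (leqnn _)) _.
  by rewrite rankA subnKC // ltnW.
have H_unit : H \in unitmx by rewrite -row_full_unit /row_full mxrank_mul_ctmx rankA.
by apply: (canRL (mulfK _)); [rewrite -unitfE -unitmxE | exact: cramer_set_row].
Qed.
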